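(* Let $\mathcal A,\mathcal B,\mathcal C$ be abelian categories and let $(\mathcal B,\mathcal A,\mathcal C, i^*, i_*, i^!, j_!, j^*, j_* )$ be a recollement of abelian categories, where $i^*,i^!:\mathcal A\to\mathcal B$, $i_*:\mathcal B\to\mathcal A$, $j^*:\mathcal A\to\mathcal C$ and $j_!,j_*:\mathcal C\to\mathcal A$. If $i^*$ and $i^!$ are exact functors, then $i^*\cong i^!$, $j_!\cong j_*$, and $\mathcal A\cong\mathcal B\oplus\mathcal C$ as categories.
   Context: A recollement $(\mathcal B,\mathcal A,\mathcal C, i^*, i_*, i^!, j_!, j^*, j_* )$ of abelian categories consists of functors $i^*,i^!:\mathcal A\to\mathcal B$, $i_*:\mathcal B\to\mathcal A$, $j^*:\mathcal A\to\mathcal C$, $j_!,j_*:\mathcal C\to\mathcal A$ such that: (i) $(i^*,i_* )$, $(i_*,i^!)$, $(j_!,j^* )$, $(j^*,j_* )$ are adjoint pairs (left adjoint written first); (ii) $i_*$, $j_!$, $j_*$ are fully faithful; (iii) $\mathrm{Im}\, i_*=\mathrm{Ker}\, j^*$, where $\mathrm{Im}\, i_*$ is the full subcategory of objects isomorphic to some $i_*B$ and $\mathrm{Ker}\, j^*$ is the full subcategory of objects $A$ with $j^*A=0$. *)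

From HB Require Import structures.
From mathcomp Require Import all_boot all_algebra.
Set Implicit Arguments. Unset Strict Implicit. Unset Printing Implicit Defensive.
Import GRing.Theory.
Local Open Scope ring_scope.

(* A preadditive (Ab-enriched) category: hom-sets are abelian groups and
   composition is biadditive.  [comp g f] is "g after f". *)
Record PreAdditiveCat := {
  Ob :> Type;
  Hom : Ob -> Ob -> zmodType;
  idm : forall a, Hom a a;
  comp : forall a b c, Hom b c -> Hom a b -> Hom a c;
  compA : forall a b c d (h : Hom c d) (g : Hom b c) (f : Hom a b),
      comp h (comp g f) = comp (comp h g) f;
  comp1m : forall a b (f : Hom a b), comp (idm b) f = f;
  compm1 : forall a b (f : Hom a b), comp f (idm a) = f;
  compDl : forall a b c (g g' : Hom b c) (f : Hom a b),
      comp (g + g') f = comp g f + comp g' f;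
  compDr : forall a b c (g : Hom b c) (f f' : Hom a b),
      comp g (f + f') = comp g f + comp g f'
}.
Arguments Hom {C} a b : rename.
Arguments idm {C} a : rename.
Arguments comp {C a b c} g f : rename.

Section CatDefs.
Variable C : PreAdditiveCat.

Definition is_zero_obj (z : C) : Prop :=
  forall a : C, (forall f g : Hom a z, f = g) /\ (forall f g : Hom z a, f = g).

Definition is_biproduct (a b p : C) (i1 : Hom a p) (i2 : Hom b p)
  (p1 : Hom p a) (p2 : Hom p b) : Prop :=
  [/\ comp p1 i1 = idm a, comp p2 i2 = idm b, comp p1 i2 = 0,
      comp p2 i1 = 0 & comp i1 p1 + comp i2 p2 = idm p].

Definition is_kernel (a b k : C) (f : Hom a b) (m : Hom k a) : Prop :=
  comp f m = 0 /\
  forall (x : C) (g : Hom x a), comp f g = 0 -> exists! h : Hom x k, comp m h = g.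

Definition is_cokernel (a b c : C) (f : Hom a b) (e : Hom b c) : Prop :=
  comp e f = 0 /\
  forall (x : C) (g : Hom b x), comp g f = 0 -> exists! h : Hom c x, comp h e = g.

Definition is_mono (a b : C) (f : Hom a b) : Prop :=
  forall (x : C) (g h : Hom x a), comp f g = comp f h -> g = h.

Definition is_epi (a b : C) (f : Hom a b) : Prop :=
  forall (x : C) (g h : Hom b x), comp g f = comp h f -> g = h.

Definition is_abelian : Prop :=
  [/\ (exists z : C, is_zero_obj z),
      (forall a b : C, exists (p : C) (i1 : Hom a p) (i2 : Hom b p)
                             (p1 : Hom p a) (p2 : Hom p b), is_biproduct i1 i2 p1 p2),
      (forall (a b : C) (f : Hom a b), exists (k : C) (m : Hom k a), is_kernel f m),
      (forall (a b : C) (f : Hom a b), exists (c : C) (e : Hom b c), is_cokernel f e)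
    & (forall (a b : C) (m : Hom a b), is_mono m ->
          exists (c : C) (f : Hom b c), is_kernel f m) /\
      (forall (a b : C) (e : Hom a b), is_epi e ->
          exists (c : C) (f : Hom c a), is_cokernel f e)].

Definition is_iso (a b : C) (f : Hom a b) : Prop :=
  exists g : Hom b a, comp g f = idm a /\ comp f g = idm b.

Definition isomorphic (a b : C) : Prop := exists f : Hom a b, is_iso f.

Definition short_exact (a b c : C) (f : Hom a b) (g : Hom b c) : Prop :=
  is_kernel g f /\ is_cokernel f g.

End CatDefs.

Record Functor (C D : PreAdditiveCat) := {
  fobj :> C -> D;
  fmap : forall a b : C, Hom a b -> Hom (fobj a) (fobj b);
  fmap1 : forall a : C, fmap (idm a) = idm (fobj a);
  fmapC : forall (a b c : C) (g : Hom b c) (f : Hom a b),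
      fmap (comp g f) = comp (fmap g) (fmap f)
}.
Arguments fmap {C D} F {a b} f : rename.

Section FunctorDefs.
Variables C D E : PreAdditiveCat.

Definition exact_functor (F : Functor C D) : Prop :=
  forall (a b c : C) (f : Hom a b) (g : Hom b c),
    short_exact f g -> short_exact (fmap F f) (fmap F g).

Definition fully_faithful (F : Functor C D) : Prop :=
  forall a b : C, bijective (@fmap C D F a b).

Definition adjoint (F : Functor C D) (G : Functor D C) : Prop :=
  exists (eta : forall a : C, Hom a (G (F a))) (eps : forall b : D, Hom (F (G b)) b),
    [/\ forall (a a' : C) (f : Hom a a'),
          comp (eta a') f = comp (fmap G (fmap F f)) (eta a),
        forall (b b' : D) (g : Hom b b'),
          comp g (eps b) = comp (eps b') (fmap F (fmap G g)),
        forall a : C, comp (eps (F a)) (fmap F (eta a)) = idm (F a)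
      & forall b : D, comp (fmap G (eps b)) (eta (G b)) = idm (G b)].

Definition nat_iso (F G : Functor C D) : Prop :=
  exists alpha : forall a : C, Hom (F a) (G a),
    (forall a, is_iso (alpha a)) /\
    forall (a b : C) (f : Hom a b), comp (alpha b) (fmap F f) = comp (fmap G f) (alpha a).

End FunctorDefs.

Definition idF (C : PreAdditiveCat) : Functor C C :=
  @Build_Functor C C (fun a => a) (fun a b f => f) (fun a => erefl) (fun a b c g f => erefl).

Definition compF_fmap (C D E : PreAdditiveCat) (G : Functor D E) (F : Functor C D)
  (a b : C) (f : Hom a b) : Hom (G (F a)) (G (F b)) := fmap G (fmap F f).

Lemma compF_fmap1 (C D E : PreAdditiveCat) (G : Functor D E) (F : Functor C D) (a : C) :
  compF_fmap G F (idm a) = idm (G (F a)).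
Proof. by rewrite /compF_fmap !fmap1. Qed.

Lemma compF_fmapC (C D E : PreAdditiveCat) (G : Functor D E) (F : Functor C D)
  (a b c : C) (g : Hom b c) (f : Hom a b) :
  compF_fmap G F (comp g f) = comp (compF_fmap G F g) (compF_fmap G F f).
Proof. by rewrite /compF_fmap !fmapC. Qed.

Definition compF (C D E : PreAdditiveCat) (G : Functor D E) (F : Functor C D) :
  Functor C E :=
  @Build_Functor C E (fun a => G (F a)) (compF_fmap G F)
    (compF_fmap1 G F) (compF_fmapC G F).

(* Product category B x C (the direct sum B (+) C of additive categories) *)
Section ProdCat.
Variables B C : PreAdditiveCat.
Definition pOb := (Ob B * Ob C)%type.
Definition pHom (x y : pOb) : zmodType := (Hom x.1 y.1 * Hom x.2 y.2)%type.
Definition pid (x : pOb) : pHom x x := (idm x.1, idm x.2).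
Definition pcomp (x y z : pOb) (g : pHom y z) (f : pHom x y) : pHom x z :=
  (comp g.1 f.1, comp g.2 f.2).
Lemma pcompA x y z w (h : pHom z w) (g : pHom y z) (f : pHom x y) :
  pcomp h (pcomp g f) = pcomp (pcomp h g) f.
Proof. by rewrite /pcomp /= !compA. Qed.
Lemma pcomp1m x y (f : pHom x y) : pcomp (pid y) f = f.
Proof. by case: f => f1 f2; rewrite /pcomp /= !comp1m. Qed.
Lemma pcompm1 x y (f : pHom x y) : pcomp f (pid x) = f.
Proof. by case: f => f1 f2; rewrite /pcomp /= !compm1. Qed.
Lemma pcompDl x y z (g g' : pHom y z) (f : pHom x y) :
  pcomp (g + g') f = pcomp g f + pcomp g' f.
Proof. by rewrite /pcomp /= !compDl. Qed.
Lemma pcompDr x y z (g : pHom y z) (f f' : pHom x y) :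
  pcomp g (f + f') = pcomp g f + pcomp g f'.
Proof. by rewrite /pcomp /= !compDr. Qed.
Definition prodCat : PreAdditiveCat :=
  @Build_PreAdditiveCat pOb pHom pid pcomp pcompA pcomp1m pcompm1 pcompDl pcompDr.
End ProdCat.

Definition cat_equiv (C D : PreAdditiveCat) : Prop :=
  exists (F : Functor C D) (G : Functor D C),
    nat_iso (compF G F) (idF C) /\ nat_iso (compF F G) (idF D).

Definition recollement (A B C : PreAdditiveCat)
  (i_up_star : Functor A B) (i_low_star : Functor B A) (i_up_shriek : Functor A B)
  (j_low_shriek : Functor C A) (j_up_star : Functor A C) (j_low_star : Functor C A) : Prop :=
  [/\ [/\ adjoint i_up_star i_low_star,
          adjoint i_low_star i_up_shriek,
          adjoint j_low_shriek j_up_star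
        & adjoint j_up_star j_low_star],
      [/\ fully_faithful i_low_star, fully_faithful j_low_shriek
        & fully_faithful j_low_star]
    & forall a : A, (exists b : B, isomorphic a (i_low_star b)) <-> is_zero_obj (j_up_star a)].

(* Write I, i, S, L, J, R for i^*, i_*, i^!, j_!, j^*, j_*, so that I -| i -| S and L -| J -| R.
   The heart of the matter is Hom(R c, i b) = 0: the coimage E of such a map is killed by J, so
   E ~ i b', and as S is exact with S R = 0 also S E = 0, whence b' = 0 and E = 0.  Consequently
   I R = 0.  In any recollement the counit i S a -> a is a kernel of the unit a -> R J a, which here
   is moreover epi; applying the exact functor I and using I R = 0 makes I(i S a -> a) invertible,
   and its inverse transposes to a retraction.  So every a is a biproduct of i S a and R J a, and
   this splitting is natural in a.  It yields A ~ B x C via a |-> (S a, J a) and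
   (b, c) |-> i b (+) R c, as well as I a ~ I i S a ~ S a and L c ~ R J L c ~ R c. *)

From mathcomp Require Import all_boot all_algebra.
From Stdlib Require Import IndefiniteDescription ChoiceFacts.
Set Implicit Arguments. Unset Strict Implicit. Unset Printing Implicit Defensive.
Import GRing.Theory.
Local Open Scope ring_scope.

Notation "g \oc f" := (comp g f) (at level 40, left associativity).

(** * Preadditive and abelian categories *)

Section PreAdditive.
Variable C : PreAdditiveCat.
Implicit Types a b c x y z : C.

Lemma compm0 a b c (g : Hom b c) : g \oc (0 : Hom a b) = 0.
Proof. by apply: (addrI (g \oc 0)); rewrite -compDr !addr0. Qed.

Lemma comp0m a b c (f : Hom a b) : (0 : Hom b c) \oc f = 0.
Proof. by apply: (addrI (0 \oc f)); rewrite -compDl !addr0. Qed.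

Lemma compBr a b c (g : Hom b c) (f f' : Hom a b) : g \oc (f - f') = g \oc f - g \oc f'.
Proof. by apply: (addIr (g \oc f')); rewrite -compDr !subrK. Qed.

Lemma compBl a b c (g g' : Hom b c) (f : Hom a b) : (g - g') \oc f = g \oc f - g' \oc f.
Proof. by apply: (addIr (g' \oc f)); rewrite -compDl !subrK. Qed.

Lemma zero_objP z : is_zero_obj z <-> idm z = 0.
Proof.
split=> [/(_ z) [_ /(_ (idm z) 0) //] | z0 a].
split=> f g; first by rewrite -(comp1m f) -(comp1m g) z0 !comp0m.
by rewrite -(compm1 f) -(compm1 g) z0 !compm0.
Qed.

Lemma zero_obj_hom_to z a (f : Hom a z) : is_zero_obj z -> f = 0.
Proof. by case/(_ a) => /(_ f 0). Qed.

Lemma zero_obj_hom_from z a (f : Hom z a) : is_zero_obj z -> f = 0.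
Proof. by case/(_ a) => _ /(_ f 0). Qed.

Lemma is_iso_id a : is_iso (idm a).
Proof. by exists (idm a); rewrite comp1m. Qed.

Lemma is_iso_comp a b c (g : Hom b c) (f : Hom a b) :
  is_iso g -> is_iso f -> is_iso (g \oc f).
Proof.
case=> g' [g'g gg'] [f' [f'f ff']]; exists (f' \oc g'); split.
  by rewrite -compA (compA g') g'g comp1m.
by rewrite -compA (compA f) ff' comp1m.
Qed.

Lemma iso_section a b (f : Hom a b) (g : Hom b a) : is_iso g -> g \oc f = idm a -> is_iso f.
Proof.
case=> h [hg gh] gf; exists g; split=> //.
by rewrite -[f \oc g]comp1m -hg -!compA (compA g) gf comp1m.
Qed.

Lemma iso_retraction a b (f : Hom a b) (g : Hom b a) : is_iso f -> g \oc f = idm a -> is_iso g.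
Proof.
case=> h [hf fh] gf; exists f; split=> //.
by rewrite -[f \oc g]compm1 -fh !compA -(compA f) gf compm1.
Qed.

Lemma iso_zero_obj_dom x y (f : Hom x y) : is_iso f -> is_zero_obj y -> is_zero_obj x.
Proof.
by case=> g [gf _] y0; apply/zero_objP; rewrite -gf (zero_obj_hom_to f y0) compm0.
Qed.

Lemma iso_zero_obj_cod x y (f : Hom x y) : is_iso f -> is_zero_obj x -> is_zero_obj y.
Proof.
by case=> g [_ fg] x0; apply/zero_objP; rewrite -fg (zero_obj_hom_from f x0) comp0m.
Qed.

Lemma iso_inv_nat a a' b b' (f : Hom a b) (f' : Hom a' b') (g : Hom b a) (g' : Hom b' a')
    (u : Hom a a') (v : Hom b b') :
  f \oc g = idm b -> g' \oc f' = idm a' -> f' \oc u = v \oc f -> g' \oc v = u \oc g.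
Proof.
move=> fg g'f' uv.
by rewrite -[g' \oc v]compm1 -fg !compA -(compA g') -uv compA g'f' comp1m.
Qed.

Lemma monoP a b (m : Hom a b) :
  is_mono m <-> forall x (g : Hom x a), m \oc g = 0 -> g = 0.
Proof.
split=> [m_mono x g mg0 | m0 x g h mgh]; first by apply: m_mono; rewrite mg0 compm0.
by apply/eqP; rewrite -subr_eq0; apply/eqP/m0; rewrite compBr mgh subrr.
Qed.

Lemma epiP a b (e : Hom a b) :
  is_epi e <-> forall x (g : Hom b x), g \oc e = 0 -> g = 0.
Proof.
split=> [e_epi x g ge0 | e0 x g h geh]; first by apply: e_epi; rewrite ge0 comp0m.
by apply/eqP; rewrite -subr_eq0; apply/eqP/e0; rewrite compBl geh subrr.
Qed.

Lemma epi_comp a b c (g : Hom b c) (f : Hom a b) : is_epi g -> is_epi f -> is_epi (g \oc f).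
Proof. by move=> g_epi f_epi x u u'; rewrite !compA => /f_epi; apply: g_epi. Qed.

Lemma mono_eq0_zero_obj a b (m : Hom a b) : is_mono m -> m = 0 -> is_zero_obj a.
Proof. by move=> m_mono m0; apply/zero_objP/m_mono; rewrite m0 !comp0m. Qed.

Lemma epi_eq0_zero_obj a b (e : Hom a b) : is_epi e -> e = 0 -> is_zero_obj b.
Proof. by move=> e_epi e0; apply/zero_objP/e_epi; rewrite e0 !compm0. Qed.

Lemma kernel_mono a b k (f : Hom a b) (m : Hom k a) : is_kernel f m -> is_mono m.
Proof.
case=> fm0 m_univ x g h mgh.
have [u [_ u_uniq]] : exists! u, m \oc u = m \oc g.
  by apply: m_univ; rewrite compA fm0 comp0m.
by rewrite -(u_uniq g erefl) (u_uniq h (esym mgh)).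
Qed.

Lemma cokernel_epi a b c (f : Hom a b) (e : Hom b c) : is_cokernel f e -> is_epi e.
Proof.
case=> ef0 e_univ x g h geh.
have [u [_ u_uniq]] : exists! u, u \oc e = g \oc e.
  by apply: e_univ; rewrite -compA ef0 compm0.
by rewrite -(u_uniq g erefl) (u_uniq h (esym geh)).
Qed.

Lemma kernel_eq0_mono a b k (v : Hom a b) (w : Hom k a) : is_kernel v w -> w = 0 -> is_mono v.
Proof.
case=> _ w_univ w0; apply/monoP => x g vg0.
by have [u [<- _]] := w_univ _ g vg0; rewrite w0 comp0m.
Qed.

Lemma kernel_factor a b c k (f : Hom a b) (e : Hom a c) (v : Hom c b) (m : Hom k a) :
  is_kernel f m -> e \oc m = 0 -> v \oc e = f -> is_kernel e m.
Proof.
case=> _ m_univ em0 ve; split=> // x g eg0.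
by apply: m_univ; rewrite -ve -compA eg0 compm0.
Qed.

Lemma kernel_iso_of_zero_obj a b k (f : Hom a b) (m : Hom k a) :
  is_kernel f m -> is_zero_obj b -> is_iso m.
Proof.
move=> m_ker b0; have [_ m_univ] := m_ker.
have [h [mh _]] := m_univ a (idm a) (zero_obj_hom_to _ b0).
exists h; split=> //; apply: (kernel_mono m_ker).
by rewrite compA mh comp1m compm1.
Qed.

Section Biproduct.
Variables (a b p : C) (i1 : Hom a p) (i2 : Hom b p) (p1 : Hom p a) (p2 : Hom p b).
Hypothesis bp : is_biproduct i1 i2 p1 p2.

Lemma biprod_pr1_in1 x (h : Hom x a) : p1 \oc (i1 \oc h) = h.
Proof. by case: bp => pi _ _ _ _; rewrite compA pi comp1m. Qed.

Lemma biprod_pr2_in2 x (h : Hom x b) : p2 \oc (i2 \oc h) = h.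
Proof. by case: bp => _ pi _ _ _; rewrite compA pi comp1m. Qed.

Lemma biprod_pr1_in2 x (h : Hom x b) : p1 \oc (i2 \oc h) = 0.
Proof. by case: bp => _ _ pi _ _; rewrite compA pi comp0m. Qed.

Lemma biprod_pr2_in1 x (h : Hom x a) : p2 \oc (i1 \oc h) = 0.
Proof. by case: bp => _ _ _ pi _; rewrite compA pi comp0m. Qed.

Lemma biprod_hom_ext x (d d' : Hom p x) :
  d \oc i1 = d' \oc i1 -> d \oc i2 = d' \oc i2 -> d = d'.
Proof.
case: bp => _ _ _ _ sum e1 e2.
by rewrite -[d]compm1 -[d']compm1 -sum !compDr !compA e1 e2.
Qed.

Lemma biprod_hom_ext_to x (d d' : Hom x p) :
  p1 \oc d = p1 \oc d' -> p2 \oc d = p2 \oc d' -> d = d'.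
Proof.
case: bp => _ _ _ _ sum e1 e2.
by rewrite -[d]comp1m -[d']comp1m -sum !compDl -!compA e1 e2.
Qed.

End Biproduct.

Lemma biprod_iso a b p p' (i1 : Hom a p) (i2 : Hom b p) p1 p2
    (i1' : Hom a p') (i2' : Hom b p') p1' p2' :
  is_biproduct i1 i2 p1 p2 -> is_biproduct i1' i2' p1' p2' ->
  is_iso (i1' \oc p1 + i2' \oc p2).
Proof.
move=> bp bp'; exists (i1 \oc p1' + i2 \oc p2').
have [_ _ _ _ sum] := bp; have [_ _ _ _ sum'] := bp'.
rewrite !compDl !compDr -!compA.
rewrite (biprod_pr1_in1 bp) (biprod_pr2_in2 bp) (biprod_pr1_in2 bp) (biprod_pr2_in1 bp).
rewrite (biprod_pr1_in1 bp') (biprod_pr2_in2 bp') (biprod_pr1_in2 bp') (biprod_pr2_in1 bp').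
by rewrite !compm0 !addr0 !add0r sum sum'.
Qed.

Lemma split_cokernel a b c (m : Hom a b) (e : Hom b c) (r : Hom b a) :
  is_cokernel m e -> r \oc m = idm a -> exists s : Hom c b, is_biproduct m s r e.
Proof.
move=> e_coker rm; have [em0 e_univ] := e_coker; have e_epi := cokernel_epi e_coker.
have [s [se _]] : exists! s, s \oc e = idm b - m \oc r.
  by apply: e_univ; rewrite compBl comp1m -compA rm compm1 subrr.
exists s; split=> //.
- by apply: e_epi; rewrite -compA se comp1m compBr compm1 compA em0 comp0m subr0.
- by apply: e_epi; rewrite -compA se comp0m compBr compm1 compA rm comp1m subrr.
- by rewrite se addrC subrK.
Qed.

Section Abelian.
Hypothesis abC : is_abelian C.

Lemma epi_cokernel_kernel a b k (e : Hom a b) (m : Hom k a) :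
  is_epi e -> is_kernel e m -> is_cokernel m e.
Proof.
move=> e_epi [em0 m_univ]; have [_ _ _ _ [_ epi_coker]] := abC.
have [c [f [ef0 e_univ]]] := epi_coker _ _ e e_epi.
split=> // x g gm0; apply: e_univ.
by have [t [<- _]] := m_univ _ f ef0; rewrite compA gm0 comp0m.
Qed.

Lemma coimage_mono a b k c (f : Hom a b) (m : Hom k a) (e : Hom a c) (v : Hom c b) :
  is_kernel f m -> is_cokernel m e -> v \oc e = f -> is_mono v.
Proof.
move=> [fm0 m_univ] e_coker ve; have e_epi := cokernel_epi e_coker.
have [_ _ has_ker has_coker _] := abC.
have [w0 [w w_ker]] := has_ker _ _ v.
have [c' [d d_coker]] := has_coker _ _ w.
have [v' [v'd _]] := d_coker.2 _ v w_ker.1.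
have de_epi : is_epi (d \oc e) := epi_comp (cokernel_epi d_coker) e_epi.
have [k' [m' m'_ker]] := has_ker _ _ (d \oc e).
have [s [ms _]] : exists! s, m \oc s = m'.
  by apply: m_univ; rewrite -ve -v'd -!compA (compA d) m'_ker.1 !compm0.
have [r [rde _]] : exists! r, r \oc (d \oc e) = e.
  by apply: (epi_cokernel_kernel de_epi m'_ker).2; rewrite -ms compA e_coker.1 comp0m.
have rd : r \oc d = idm c by apply: e_epi; rewrite -compA rde comp1m.
apply: (kernel_eq0_mono w_ker).
by rewrite -(comp1m w) -rd -compA d_coker.1 compm0.
Qed.

End Abelian.
End PreAdditive.

Lemma fmap_iso (C D : PreAdditiveCat) (F : Functor C D) (a b : C) (f : Hom a b) :
  is_iso f -> is_iso (fmap F f).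
Proof. by case=> g [gf fg]; exists (fmap F g); rewrite -!fmapC gf fg !fmap1. Qed.

Lemma fmap_zero_obj (C D : PreAdditiveCat) (F : Functor C D) (z : C) :
  (forall x y : C, fmap F (0 : Hom x y) = 0) -> is_zero_obj z -> is_zero_obj (F z).
Proof. by move=> F0 /zero_objP z0; apply/zero_objP; rewrite -fmap1 z0 F0. Qed.

(** * Adjunctions *)

Record adjunction (C D : PreAdditiveCat) (F : Functor C D) (G : Functor D C) := Adjunction {
  adj_unit : forall a : C, Hom a (G (F a));
  adj_counit : forall b : D, Hom (F (G b)) b;
  adj_unit_nat : forall (a a' : C) (f : Hom a a'),
    adj_unit a' \oc f = fmap G (fmap F f) \oc adj_unit a;
  adj_counit_nat : forall (b b' : D) (g : Hom b b'),
    g \oc adj_counit b = adj_counit b' \oc fmap F (fmap G g);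
  adj_triangleF : forall a : C, adj_counit (F a) \oc fmap F (adj_unit a) = idm (F a);
  adj_triangleG : forall b : D, fmap G (adj_counit b) \oc adj_unit (G b) = idm (G b)
}.

Lemma adjoint_adjunction (C D : PreAdditiveCat) (F : Functor C D) (G : Functor D C) :
  adjoint F G -> inhabited (adjunction F G).
Proof. by case=> eta [eps [? ? ? ?]]; constructor; exact: (@Adjunction _ _ _ _ eta eps). Qed.

Section Adjunction.
Variables (C D : PreAdditiveCat) (F : Functor C D) (G : Functor D C) (adj : adjunction F G).
Local Notation eta := (adj_unit adj).
Local Notation eps := (adj_counit adj).

Definition adj_hom x y (f : Hom (F x) y) : Hom x (G y) := fmap G f \oc eta x.
Definition adj_hom_inv x y (g : Hom x (G y)) : Hom (F x) y := eps y \oc fmap F g.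

Lemma adj_homK x y : cancel (@adj_hom x y) (@adj_hom_inv x y).
Proof.
move=> f; rewrite /adj_hom_inv /adj_hom fmapC compA -(adj_counit_nat adj).
by rewrite -compA (adj_triangleF adj) compm1.
Qed.

Lemma adj_hom_invK x y : cancel (@adj_hom_inv x y) (@adj_hom x y).
Proof.
move=> g; rewrite /adj_hom /adj_hom_inv fmapC -compA -(adj_unit_nat adj).
by rewrite compA (adj_triangleG adj) comp1m.
Qed.

Lemma left_adjoint_hom_eq0 x y (f : Hom (F x) y) :
  (forall g : Hom x (G y), g = 0) -> f = 0.
Proof. by move=> hom0; apply: (can_inj (@adj_homK x y)); rewrite [LHS]hom0 [RHS]hom0. Qed.

Lemma right_adjoint_hom_eq0 x y (g : Hom x (G y)) :
  (forall f : Hom (F x) y, f = 0) -> g = 0.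
Proof. by move=> hom0; apply: (can_inj (@adj_hom_invK x y)); rewrite [LHS]hom0 [RHS]hom0. Qed.

Lemma left_adjoint_fmap0 : (exists z : C, is_zero_obj z) ->
  forall x y : C, fmap F (0 : Hom x y) = 0.
Proof.
case=> z z0 x y; rewrite -(comp0m _ (0 : Hom x z)) fmapC.
rewrite (left_adjoint_hom_eq0 (fmap F (0 : Hom z y))) ?comp0m // => g.
exact: zero_obj_hom_from.
Qed.

Lemma right_adjoint_fmap0 : (exists z : D, is_zero_obj z) ->
  forall x y : D, fmap G (0 : Hom x y) = 0.
Proof.
case=> z z0 x y; rewrite -(compm0 _ (0 : Hom z y)) fmapC.
rewrite (right_adjoint_hom_eq0 (fmap G (0 : Hom x z))) ?compm0 // => f.
exact: zero_obj_hom_to.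
Qed.

Lemma adj_hom0 x y : (exists z : D, is_zero_obj z) -> adj_hom (0 : Hom (F x) y) = 0.
Proof. by move=> zD; rewrite /adj_hom right_adjoint_fmap0 // comp0m. Qed.

Lemma counit_adj_hom x y (f : Hom (F x) y) : eps y \oc fmap F (adj_hom f) = f.
Proof. exact: adj_homK. Qed.

Lemma left_adjoint_epi a a' (e : Hom a a') : is_epi e -> is_epi (fmap F e).
Proof.
move=> e_epi x g h gFe; apply: (can_inj (@adj_homK a' x)); apply: e_epi.
by rewrite /adj_hom -!compA !(adj_unit_nat adj) !compA -!fmapC gFe.
Qed.

Lemma right_adjoint_mono b b' (m : Hom b b') : is_mono m -> is_mono (fmap G m).
Proof.
move=> m_mono x g h Gmgh; apply: (can_inj (@adj_hom_invK x b)); apply: m_mono.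
by rewrite /adj_hom_inv !compA !(adj_counit_nat adj) -!compA -!fmapC Gmgh.
Qed.

Lemma eq_fmap_left_adjoint a a' (e e' : Hom a a') :
  eta a' \oc e = eta a' \oc e' -> fmap F e = fmap F e'.
Proof.
move=> eta_e; rewrite -(comp1m (fmap F e)) -(comp1m (fmap F e')) -(adj_triangleF adj).
by rewrite -!compA -!fmapC eta_e.
Qed.

Lemma eq_fmap_right_adjoint b b' (e e' : Hom b b') :
  e \oc eps b = e' \oc eps b -> fmap G e = fmap G e'.
Proof.
move=> e_eps; rewrite -(compm1 (fmap G e)) -(compm1 (fmap G e')) -(adj_triangleG adj).
by rewrite !compA -!fmapC e_eps.
Qed.

Lemma adj_retraction b a (m : Hom (G b) a) (t : Hom (F a) (F (G b))) :
  t \oc fmap F m = idm _ -> adj_hom (eps b \oc t) \oc m = idm (G b).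
Proof.
move=> tm; rewrite /adj_hom -compA (adj_unit_nat adj) compA -fmapC -compA tm compm1.
exact: (adj_triangleG adj).
Qed.

Lemma counit_iso : fully_faithful G -> forall b, is_iso (eps b).
Proof.
move=> ffG b; have [Ginv _ GinvK] := ffG b (F (G b)).
exists (Ginv (eta (G b))); split; first by rewrite (adj_counit_nat adj) GinvK (adj_triangleF adj).
have [Ginv' Ginv'K _] := ffG b b.
by rewrite -(Ginv'K (_ \oc _)) -(Ginv'K (idm b)) fmapC GinvK (adj_triangleG adj) fmap1.
Qed.

Lemma unit_iso : fully_faithful F -> forall a, is_iso (eta a).
Proof.
move=> ffF a; have [Finv _ FinvK] := ffF (G (F a)) a.
exists (Finv (eps (F a))); split; last by rewrite (adj_unit_nat adj) FinvK (adj_triangleG adj).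
have [Finv' Finv'K _] := ffF a a.
by rewrite -(Finv'K (_ \oc _)) -(Finv'K (idm a)) fmapC FinvK (adj_triangleF adj) fmap1.
Qed.

Lemma unit_inverse : fully_faithful F ->
  exists eta' : forall a, Hom (G (F a)) a,
    (forall a, eta' a \oc eta a = idm a /\ eta a \oc eta' a = idm _) /\
    forall a a' (f : Hom a a'), eta' a' \oc fmap G (fmap F f) = f \oc eta' a.
Proof.
move=> ffF.
have [eta' eta'K] := @non_dep_dep_functional_choice functional_choice _
  (fun a => Hom (G (F a)) a) (fun a g => g \oc eta a = idm a /\ eta a \oc g = idm _)
  (unit_iso ffF).
exists eta'; split=> // a a' f.
exact: iso_inv_nat (eta'K a).2 (eta'K a').1 (adj_unit_nat adj f).
Qed.

End Adjunction.

(** * Product categories and biproduct functors *)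

Lemma prod_iso (B C : PreAdditiveCat) (x y : prodCat B C) (f : Hom x y) :
  is_iso f.1 -> is_iso f.2 -> is_iso f.
Proof.
case: f => f1 f2 [g1 [g1f1 f1g1]] [g2 [g2f2 f2g2]].
by exists (g1, g2); rewrite /= /pcomp /pid /= g1f1 f1g1 g2f2 f2g2.
Qed.

Section PairFunctor.
Variables (A B C : PreAdditiveCat) (F : Functor A B) (G : Functor A C).

Definition pair_fmap (a b : A) (f : Hom a b) : @Hom (prodCat B C) (F a, G a) (F b, G b) :=
  (fmap F f, fmap G f).

Lemma pair_fmap1 a : pair_fmap (idm a) = idm ((F a, G a) : prodCat B C).
Proof. by rewrite /pair_fmap !fmap1. Qed.

Lemma pair_fmapC a b c (g : Hom b c) (f : Hom a b) :
  pair_fmap (g \oc f) = pair_fmap g \oc pair_fmap f.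
Proof. by rewrite /pair_fmap !fmapC. Qed.

Definition pairF : Functor A (prodCat B C) := Build_Functor pair_fmap1 pair_fmapC.

End PairFunctor.

Record biproduct (C : PreAdditiveCat) (a b : C) := Biproduct {
  bp_obj : C;
  bp_in1 : Hom a bp_obj;
  bp_in2 : Hom b bp_obj;
  bp_pr1 : Hom bp_obj a;
  bp_pr2 : Hom bp_obj b;
  bp_spec : is_biproduct bp_in1 bp_in2 bp_pr1 bp_pr2
}.

Lemma abelian_biproduct (C : PreAdditiveCat) :
  is_abelian C -> forall a b : C, inhabited (biproduct a b).
Proof.
case=> _ has_biprod _ _ _ a b.
by have [p [i1 [i2 [p1 [p2 bp]]]]] := has_biprod a b; constructor; exact: Biproduct bp.
Qed.

Section BiproductFunctor.
Variables (A B C : PreAdditiveCat) (U : Functor B A) (V : Functor C A).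
Variable bp : forall x : prodCat B C, biproduct (U x.1) (V x.2).

Definition biprod_fmap (x y : prodCat B C) (f : Hom x y) :
    Hom (bp_obj (bp x)) (bp_obj (bp y)) :=
  bp_in1 (bp y) \oc fmap U f.1 \oc bp_pr1 (bp x) + bp_in2 (bp y) \oc fmap V f.2 \oc bp_pr2 (bp x).

Lemma biprod_fmap1 x : biprod_fmap (idm x) = idm _.
Proof. by rewrite /biprod_fmap /= !fmap1 !compm1; case: (bp_spec (bp x)). Qed.

Lemma biprod_fmapC x y z (g : Hom y z) (f : Hom x y) :
  biprod_fmap (g \oc f) = biprod_fmap g \oc biprod_fmap f.
Proof.
have bpy := bp_spec (bp y).
rewrite /biprod_fmap /= compDl !compDr -!compA (biprod_pr1_in1 bpy) (biprod_pr2_in2 bpy).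
rewrite (biprod_pr1_in2 bpy) (biprod_pr2_in1 bpy) !compm0 addr0 add0r.
by rewrite !fmapC !compA.
Qed.

Definition biprodF : Functor (prodCat B C) A := Build_Functor biprod_fmap1 biprod_fmapC.

Lemma biprod_fmap_pr1 x y (f : Hom x y) :
  bp_pr1 (bp y) \oc biprod_fmap f = fmap U f.1 \oc bp_pr1 (bp x).
Proof.
have bpy := bp_spec (bp y).
by rewrite /biprod_fmap compDr -!compA (biprod_pr1_in1 bpy) (biprod_pr1_in2 bpy) addr0.
Qed.

Lemma biprod_fmap_pr2 x y (f : Hom x y) :
  bp_pr2 (bp y) \oc biprod_fmap f = fmap V f.2 \oc bp_pr2 (bp x).
Proof.
have bpy := bp_spec (bp y).
by rewrite /biprod_fmap compDr -!compA (biprod_pr2_in2 bpy) (biprod_pr2_in1 bpy) add0r.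
Qed.

End BiproductFunctor.

(** * Recollements with exact i^* and i^! *)

Section Recollement.
Variables (A B C : PreAdditiveCat) (I : Functor A B) (i : Functor B A) (S : Functor A B)
  (L : Functor C A) (J : Functor A C) (R : Functor C A).
Variables (adjI : adjunction I i) (adjS : adjunction i S) (adjL : adjunction L J)
  (adjR : adjunction J R).
Hypotheses (ff_i : fully_faithful i) (ff_L : fully_faithful L) (ff_R : fully_faithful R).
Hypothesis im_i : forall a : A, (exists b : B, isomorphic a (i b)) <-> is_zero_obj (J a).
Hypotheses (abA : is_abelian A) (zeroB : exists z : B, is_zero_obj z).
Hypotheses (exact_I : exact_functor I) (exact_S : exact_functor S).

Local Notation epsI := (adj_counit adjI).
Local Notation etaS := (adj_unit adjS).
Local Notation epsS := (adj_counit adjS).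
Local Notation etaL := (adj_unit adjL).
Local Notation etaR := (adj_unit adjR).
Local Notation epsR := (adj_counit adjR).

Lemma zero_objA : exists z : A, is_zero_obj z.
Proof. by case: abA. Qed.

Lemma fmap_i0 (x y : B) : fmap i (0 : Hom x y) = 0.
Proof. exact: left_adjoint_fmap0 adjS zeroB x y. Qed.

Lemma fmap_J0 (x y : A) : fmap J (0 : Hom x y) = 0.
Proof. exact: left_adjoint_fmap0 adjR zero_objA x y. Qed.

Lemma zero_obj_J_i b : is_zero_obj (J (i b)).
Proof. by apply/im_i; exists b, (idm _); exact: is_iso_id. Qed.

Lemma hom_i_R_eq0 b c (f : Hom (i b) (R c)) : f = 0.
Proof. by apply: (right_adjoint_hom_eq0 adjR) => g; apply: zero_obj_hom_from (zero_obj_J_i b). Qed.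

Lemma hom_L_i_eq0 c b (f : Hom (L c) (i b)) : f = 0.
Proof. by apply: (left_adjoint_hom_eq0 adjL) => g; apply: zero_obj_hom_to (zero_obj_J_i b). Qed.

Lemma zero_obj_S_R c : is_zero_obj (S (R c)).
Proof. by apply/zero_objP; apply: (right_adjoint_hom_eq0 adjS) => f; apply: hom_i_R_eq0. Qed.

Lemma zero_obj_of_J_S a : is_zero_obj (J a) -> is_zero_obj (S a) -> is_zero_obj a.
Proof.
move=> /im_i [b [phi phi_iso]] Sa0.
have b0 : is_zero_obj b.
  apply: iso_zero_obj_dom (unit_iso adjS ff_i b) _.
  exact: iso_zero_obj_cod (fmap_iso S phi_iso) Sa0.
exact: iso_zero_obj_dom phi_iso (fmap_zero_obj fmap_i0 b0).
Qed.

Lemma hom_R_i_eq0 c b (f : Hom (R c) (i b)) : f = 0.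
Proof.
have [_ _ has_ker has_coker _] := abA.
have [K [k k_ker]] := has_ker _ _ f.
have [E [e e_coker]] := has_coker _ _ k.
have [v [ve _]] := e_coker.2 _ f k_ker.1.
suff E0 : is_zero_obj E by rewrite -ve (zero_obj_hom_from v E0) comp0m.
apply: zero_obj_of_J_S.
  apply: (mono_eq0_zero_obj (right_adjoint_mono adjL (coimage_mono abA k_ker e_coker ve))).
  exact: zero_obj_hom_to (zero_obj_J_i b).
have ke_exact : short_exact k e.
  by split; [exact: kernel_factor k_ker e_coker.1 ve | exact: e_coker].
apply: (epi_eq0_zero_obj (cokernel_epi (exact_S ke_exact).2)).
exact: zero_obj_hom_from (zero_obj_S_R c).
Qed.

Lemma zero_obj_I_R c : is_zero_obj (I (R c)).
Proof. by apply/zero_objP; apply: (left_adjoint_hom_eq0 adjI) => g; apply: hom_R_i_eq0. Qed.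

Lemma hom_R_eq0 c a (f : Hom (R c) a) : is_zero_obj (J a) -> f = 0.
Proof.
move=> /im_i [b [phi [phi' [phi'phi _]]]].
by rewrite -(comp1m f) -phi'phi -compA (hom_R_i_eq0 (phi \oc f)) compm0.
Qed.

Lemma iso_J_unit_R a : is_iso (fmap J (etaR a)).
Proof. exact: iso_section (counit_iso adjR ff_R (J a)) (adj_triangleF adjR a). Qed.

Lemma counit_S_mono a : is_mono (epsS a).
Proof.
apply/monoP => x d epsd0.
have [_ _ has_ker _ _] := abA.
have [K [k k_ker]] := has_ker _ _ (epsS a).
have /im_i [b [phi [phi' [phi'phi _]]]] : is_zero_obj (J K).
  apply: (mono_eq0_zero_obj (right_adjoint_mono adjL (kernel_mono k_ker))).
  exact: zero_obj_hom_to (zero_obj_J_i _).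
have [f0 f0E] : exists f0 : Hom b (S a), fmap i f0 = k \oc phi'.
  by have [g _ gK] := ff_i b (S a); exists (g (k \oc phi')).
have f00 : f0 = 0.
  rewrite -(adj_hom_invK adjS f0) /adj_hom_inv f0E compA k_ker.1 comp0m.
  exact: adj_hom0 zero_objA.
have k0 : k = 0 by rewrite -(compm1 k) -phi'phi compA -f0E f00 fmap_i0 comp0m.
by have [h [<- _]] := k_ker.2 _ d epsd0; rewrite k0 comp0m.
Qed.

Lemma unit_R_epi a : is_epi (etaR a).
Proof.
apply/epiP => x g getaR0.
have [_ _ _ has_coker _] := abA.
have [Q [q q_coker]] := has_coker _ _ (etaR a).
have Jq0 : fmap J q = 0.
  have [t [_ Jetat]] := iso_J_unit_R a.
  by rewrite -(compm1 (fmap J q)) -Jetat compA -fmapC q_coker.1 fmap_J0 comp0m.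
have q0 : q = 0.
  apply: hom_R_eq0.
  exact: epi_eq0_zero_obj (left_adjoint_epi adjR (cokernel_epi q_coker)) Jq0.
by have [h [<- _]] := q_coker.2 _ g getaR0; rewrite q0 compm0.
Qed.

Lemma counit_S_kernel a : is_kernel (etaR a) (epsS a).
Proof.
split=> [|x g etag0]; first exact: hom_i_R_eq0.
suff [h <-] : exists h, epsS a \oc h = g.
  by exists h; split=> // h' /counit_S_mono ->.
have [_ _ has_ker _ _] := abA.
have [K [k k_ker]] := has_ker _ _ (etaR a).
have Jk0 : fmap J k = 0.
  have [t [tJeta _]] := iso_J_unit_R a.
  by rewrite -(comp1m (fmap J k)) -tJeta -compA -fmapC k_ker.1 fmap_J0 compm0.
have /im_i [b [phi [phi' [phi'phi _]]]] : is_zero_obj (J K).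
  exact: mono_eq0_zero_obj (right_adjoint_mono adjL (kernel_mono k_ker)) Jk0.
have [h0 [kh0 _]] := k_ker.2 _ g etag0.
exists (fmap i (adj_hom adjS (k \oc phi')) \oc phi \oc h0).
by rewrite !compA counit_adj_hom -(compA k) phi'phi compm1.
Qed.

Lemma unit_R_cokernel a : is_cokernel (epsS a) (etaR a).
Proof. exact: (epi_cokernel_kernel abA (@unit_R_epi a) (counit_S_kernel a)). Qed.

Lemma iso_I_counit_S a : is_iso (fmap I (epsS a)).
Proof.
have exact_epsS_etaR : short_exact (epsS a) (etaR a).
  by split; [exact: counit_S_kernel | exact: unit_R_cokernel].
exact: kernel_iso_of_zero_obj (exact_I exact_epsS_etaR).1 (zero_obj_I_R _).
Qed.

Lemma recollement_splits a : exists rho tau, is_biproduct (epsS a) tau rho (etaR a).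
Proof.
have [t [tIeps _]] := iso_I_counit_S a.
exists (adj_hom adjI (epsI (S a) \oc t)).
exact: split_cokernel (unit_R_cokernel a) (adj_retraction adjI tIeps).
Qed.

Section Splitting.
Variables (rho : forall a, Hom a (i (S a))) (tau : forall a, Hom (R (J a)) a).
Hypothesis splitting : forall a, is_biproduct (epsS a) (tau a) (rho a) (etaR a).

Lemma rho_nat a a' (f : Hom a a') : rho a' \oc f = fmap i (fmap S f) \oc rho a.
Proof.
apply: (biprod_hom_ext (splitting a)); last by rewrite [LHS]hom_R_i_eq0 [RHS]hom_R_i_eq0.
have [rho_eps _ _ _ _] := splitting a; have [rho_eps' _ _ _ _] := splitting a'.
by rewrite -!compA rho_eps compm1 (adj_counit_nat adjS) compA rho_eps' comp1m.
Qed.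

Lemma tau_nat a a' (f : Hom a a') : f \oc tau a = tau a' \oc fmap R (fmap J f).
Proof.
apply: (biprod_hom_ext_to (splitting a')); first by rewrite [LHS]hom_R_i_eq0 [RHS]hom_R_i_eq0.
have [_ eta_tau _ _ _] := splitting a; have [_ eta_tau' _ _ _] := splitting a'.
by rewrite compA (adj_unit_nat adjR) -compA eta_tau compm1 compA eta_tau' comp1m.
Qed.

Lemma nat_iso_I_S : nat_iso I S.
Proof.
exists (fun a => epsI (S a) \oc fmap I (rho a)); split=> [a | a a' f /=].
  apply: is_iso_comp (counit_iso adjI ff_i (S a)) _.
  apply: iso_retraction (iso_I_counit_S a) _.
  by have [rho_eps _ _ _ _] := splitting a; rewrite -fmapC rho_eps fmap1.
by rewrite -compA -fmapC rho_nat fmapC compA -(adj_counit_nat adjI) compA.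
Qed.

Lemma nat_iso_L_R : nat_iso L R.
Proof.
have [etaL' [etaL'K etaL'_nat]] := unit_inverse adjL ff_L.
exists (fun c => fmap R (etaL' c) \oc etaR (L c)); split=> [c | c c' g /=].
  apply: is_iso_comp; first by apply: fmap_iso; case: (etaL'K c) => ? ?; exists (etaL c).
  have [_ eta_tau _ _ sum] := splitting (L c).
  by exists (tau (L c)); rewrite -sum (hom_L_i_eq0 (rho (L c))) compm0 add0r.
by rewrite -compA (adj_unit_nat adjR) compA -fmapC etaL'_nat fmapC compA.
Qed.

Variable bp : forall x : prodCat B C, biproduct (i x.1) (R x.2).

Lemma S_in1_pr1 x : fmap S (bp_in1 (bp x) \oc bp_pr1 (bp x)) = idm _.
Proof.
have [_ _ _ _ sum] := bp_spec (bp x).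
rewrite -fmap1; apply: (eq_fmap_right_adjoint (adj := adjS)).
rewrite -sum compDl -[_ \oc bp_pr2 _ \oc _]compA.
by rewrite (hom_i_R_eq0 (bp_pr2 _ \oc _)) compm0 addr0.
Qed.

Lemma J_in2_pr2 x : fmap J (bp_in2 (bp x) \oc bp_pr2 (bp x)) = idm _.
Proof.
have [_ _ _ _ sum] := bp_spec (bp x).
rewrite -fmap1; apply: (eq_fmap_left_adjoint (adj := adjR)).
rewrite -sum compDr [etaR _ \oc (bp_in1 _ \oc _)]compA.
by rewrite (hom_i_R_eq0 (etaR _ \oc bp_in1 _)) comp0m add0r.
Qed.

Lemma nat_iso_biprod_pair : nat_iso (compF (biprodF bp) (pairF S J)) (idF A).
Proof.
exists (fun a => epsS a \oc bp_pr1 (bp (S a, J a)) + tau a \oc bp_pr2 (bp (S a, J a))).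
split=> [a | a a' f /=]; first exact: biprod_iso (bp_spec _) (splitting a).
have /= pr1_fmap := biprod_fmap_pr1 bp (pair_fmap S J f).
have /= pr2_fmap := biprod_fmap_pr2 bp (pair_fmap S J f).
rewrite compDl -!compA pr1_fmap pr2_fmap !compA.
by rewrite -(adj_counit_nat adjS) -tau_nat compDr !compA.
Qed.

Lemma nat_iso_pair_biprod : nat_iso (compF (pairF S J) (biprodF bp)) (idF (prodCat B C)).
Proof.
have [etaS' [etaS'K etaS'_nat]] := unit_inverse adjS ff_i.
exists (fun x => (etaS' x.1 \oc fmap S (bp_pr1 (bp x)), epsR x.2 \oc fmap J (bp_pr2 (bp x)))
  : Hom (pairF S J (biprodF bp x)) x).
split=> [x | x y g].
- have [pr1_in1 pr2_in2 _ _ _] := bp_spec (bp x).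
  apply: prod_iso; apply: is_iso_comp.
  + by case: (etaS'K x.1) => ? ?; exists (etaS x.1).
  + by exists (fmap S (bp_in1 (bp x))); rewrite -!fmapC pr1_in1 S_in1_pr1 fmap1.
  + exact: counit_iso adjR ff_R x.2.
  + by exists (fmap J (bp_in2 (bp x))); rewrite -!fmapC pr2_in2 J_in2_pr2 fmap1.
- rewrite /= /pcomp /compF_fmap /=; congr (_, _).
  + by rewrite -compA -fmapC biprod_fmap_pr1 fmapC compA etaS'_nat compA.
  + by rewrite -compA -fmapC biprod_fmap_pr2 fmapC compA -(adj_counit_nat adjR) compA.
Qed.

End Splitting.

Lemma recollement_decomposition :
  [/\ nat_iso I S, nat_iso L R & cat_equiv A (prodCat B C)].
Proof.
have [rt splitting] : exists rt : forall a, (Hom a (i (S a)) * Hom (R (J a)) a)%type,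
    forall a, is_biproduct (epsS a) (rt a).2 (rt a).1 (etaR a).
  apply: (@non_dep_dep_functional_choice functional_choice _ _
    (fun a rt => is_biproduct (epsS a) rt.2 rt.1 (etaR a))) => a.
  by have [rho [tau rt_split]] := recollement_splits a; exists (rho, tau).
have [bp] : inhabited (forall x : prodCat B C, biproduct (i x.1) (R x.2)).
  exact: functional_choice_to_inhabited_forall_commute functional_choice _ _
    (fun x => abelian_biproduct abA _ _).
split; [exact: (nat_iso_I_S splitting) | exact: (nat_iso_L_R splitting) |].
exists (pairF S J), (biprodF bp).
by split; [exact: (nat_iso_biprod_pair splitting bp) | exact: (nat_iso_pair_biprod bp)].
Qed.

End Recollement.

Theorem theorem1p1 (A B C : PreAdditiveCat)
  (i_up_star : Functor A B) (i_low_star : Functor B A) (i_up_shriek : Functor A B)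
  (j_low_shriek : Functor C A) (j_up_star : Functor A C) (j_low_star : Functor C A) :
  is_abelian A -> is_abelian B -> is_abelian C ->
  recollement i_up_star i_low_star i_up_shriek j_low_shriek j_up_star j_low_star ->
  exact_functor i_up_star -> exact_functor i_up_shriek ->
  [/\ nat_iso i_up_star i_up_shriek,
      nat_iso j_low_shriek j_low_star
    & cat_equiv A (prodCat B C)].
Proof.
move=> abA [zeroB _ _ _ _] _.
move=> [[/adjoint_adjunction [adjI] /adjoint_adjunction [adjS]
         /adjoint_adjunction [adjL] /adjoint_adjunction [adjR]] [ff_i ff_L ff_R] im_i].
exact: (recollement_decomposition adjI adjS adjL adjR ff_i ff_L ff_R im_i abA zeroB).
Qed.
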